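(* Let $n\geq 2$, $1\leq k\leq n-1$ and $w=w_1\cdots w_n\in\mathfrak{S}_n$. Let $\gamma=w_i\cdots w_j$ and $\delta=w_{i'}\cdots w_{j'}$ each be a maximal $k$-ascending section or a maximal $k$-descending section of $w$. If $j<i'$, then there is a $k$-up or a $k$-down in $w_jw_{j+1}\cdots w_{i'}$.
   Context: $\mathfrak{S}_n$ is the set of permutations $w=w_1\cdots w_n$ of $\{1,\dots,n\}$. A section of $w$ is a consecutive block $w_sw_{s+1}\cdots w_t$ ($s\le t$). A section $w_s\cdots w_t$ is a $k$-up if $s<t$ and $w_t-w_s\geq k$, and a $k$-down if $s<t$ and $w_s-w_t\geq k$; a $k$-up/$k$-down ''in'' $w_a\cdots w_b$ means one $w_s\cdots w_t$ with $a\le s<t\le b$. A section $w_i\cdots w_j$ ($i<j$) is $k$-ascending if $w_i=\min\{w_i,\dots,w_j\}$, $w_j=\max\{w_i,\dots,w_j\}$, $w_j-w_i\geq k$, and there is no $k$-down in $w_i\cdots w_j$. It is $k$-descending if $w_i=\max\{w_i,\dots,w_j\}$, $w_j=\min\{w_i,\dots,w_j\}$, $w_i-w_j\geq k$, and there is no $k$-up in $w_i\cdots w_j$. A $k$-ascending (resp. $k$-descending) section is maximal if it is not contained in another $k$-ascending (resp. $k$-descending) section. *)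

From mathcomp Require Import all_boot all_order all_algebra all_fingroup.
Set Implicit Arguments. Unset Strict Implicit. Unset Printing Implicit Defensive.
Import GRing.Theory Num.Theory.

(* Positions of w are 0-indexed naturals p < n (position p here is w_{p+1}
   of the paper); values are w p in 'I_n, i.e. {0,..,n-1} (a shift by one of
   {1,..,n}, which does not affect any difference or comparison). *)

Definition wval (n : nat) (w : 'S_n) (p : nat) : int :=
  match insub p with Some q => (val (w q))%:Z | None => 0%R end.

Definition kup (n : nat) (w : 'S_n) (k s t : nat) : Prop :=
  (s < t < n)%N /\ (k%:Z <= wval w t - wval w s)%R.
Definition kdown (n : nat) (w : 'S_n) (k s t : nat) : Prop :=
  (s < t < n)%N /\ (k%:Z <= wval w s - wval w t)%R.

Definition kup_in (n : nat) (w : 'S_n) (k a b : nat) : Prop :=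
  exists s t, (a <= s)%N /\ (t <= b)%N /\ kup w k s t.
Definition kdown_in (n : nat) (w : 'S_n) (k a b : nat) : Prop :=
  exists s t, (a <= s)%N /\ (t <= b)%N /\ kdown w k s t.

Definition k_ascending (n : nat) (w : 'S_n) (k i j : nat) : Prop :=
  [/\ (i < j < n)%N,
      (forall m, (i <= m <= j)%N -> (wval w i <= wval w m)%R /\ (wval w m <= wval w j)%R),
      (k%:Z <= wval w j - wval w i)%R
    & ~ kdown_in w k i j].

Definition k_descending (n : nat) (w : 'S_n) (k i j : nat) : Prop :=
  [/\ (i < j < n)%N,
      (forall m, (i <= m <= j)%N -> (wval w j <= wval w m)%R /\ (wval w m <= wval w i)%R),
      (k%:Z <= wval w i - wval w j)%R
    & ~ kup_in w k i j].

Definition max_k_ascending (n : nat) (w : 'S_n) (k i j : nat) : Prop :=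
  k_ascending w k i j /\
  forall i' j', k_ascending w k i' j' -> (i' <= i)%N -> (j <= j')%N -> i' = i /\ j' = j.

Definition max_k_descending (n : nat) (w : 'S_n) (k i j : nat) : Prop :=
  k_descending w k i j /\
  forall i' j', k_descending w k i' j' -> (i' <= i)%N -> (j <= j')%N -> i' = i /\ j' = j.

Definition max_k_section (n : nat) (w : 'S_n) (k i j : nat) : Prop :=
  max_k_ascending w k i j \/ max_k_descending w k i j.

(** Suppose the stretch w_j ... w_i' between two maximal sections contains
    neither a k-up nor a k-down, i.e. all its values lie within distance k of
    each other.  If both sections go the same way (say both are ascending),
    their union with this stretch is again a k-ascending section, contradicting
    maximality.  If gamma is ascending and delta descending, let m be a position
    of the largest value on the stretch: gamma extends to the right up to m and
    delta extends to the left back to m, so maximality forces j = m = i'. *)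

From Stdlib Require Import Classical_Prop.
From mathcomp Require Import all_boot all_order all_algebra all_fingroup.
From mathcomp Require Import zify.
Set Implicit Arguments. Unset Strict Implicit.
Import Order.TTheory GRing.Theory Num.Theory.

Lemma exists_argmax d (T : orderType d) (f : nat -> T) a b : (a <= b)%N ->
  exists2 m, (a <= m <= b)%N & forall x, (a <= x <= b)%N -> (f x <= f m)%O.
Proof.
elim: b => [|b IH] hab.
  by exists 0%N => [|x hx]; [lia | have -> : x = 0%N by lia].
have last_only x : (a <= x <= b.+1)%N -> ~~ (x <= b)%N -> x = b.+1 by lia.
case: (leqP a b) => [hab'|lt_ba]; last first.
  by exists b.+1 => [|x hx]; [lia | rewrite (last_only x hx) //; lia].
have [m hm fm_max] := IH hab'.
case: (leP (f m) (f b.+1)) => hfm.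
- exists b.+1 => [|x hx]; first lia.
  case: (boolP (x <= b)%N) => hxb; last by rewrite (last_only x hx hxb).
  by apply: le_trans hfm; apply: fm_max; lia.
- exists m => [|x hx]; first lia.
  case: (boolP (x <= b)%N) => hxb; last by rewrite (last_only x hx hxb) ltW.
  by apply: fm_max; lia.
Qed.

Section AscendingSections.
Variables (f : nat -> int) (k : nat).

Definition asc_section (i j : nat) : Prop :=
  [/\ (i < j)%N,
      forall m, (i <= m)%N -> (m <= j)%N -> (f i <= f m)%R /\ (f m <= f j)%R,
      (k%:Z <= f j - f i)%R
    & forall s t, (i <= s)%N -> (s < t)%N -> (t <= j)%N -> (f s - f t < k%:Z)%R].

Definition flat_section (a b : nat) : Prop :=
  forall s t, (a <= s)%N -> (s < t)%N -> (t <= b)%N ->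
    (f s - f t < k%:Z)%R /\ (f t - f s < k%:Z)%R.

Definition maximal_asc_section (N i j : nat) : Prop :=
  [/\ asc_section i j, (j < N)%N &
      forall i' j', (j' < N)%N -> asc_section i' j' ->
        (i' <= i)%N -> (j <= j')%N -> i' = i /\ j' = j].

Lemma asc_section_extend_right i j b m :
  asc_section i j -> flat_section j b -> (j <= m <= b)%N ->
  (forall x, (j <= x <= b)%N -> (f x <= f m)%R) -> asc_section i m.
Proof.
case=> lt_ij bounds gap no_down flat /andP[le_jm le_mb] m_max.
have fjm : (f j <= f m)%R by apply: m_max; lia.
split; first lia.
- move=> x le_ix le_xm; case: (leqP x j) => hxj.
  + have := bounds x le_ix hxj; lia.
  + have := m_max x; have := flat j x (leqnn _) hxj; lia.
- lia.
- move=> s t le_is lt_st le_tm; case: (leqP t j) => htj; first exact: no_down.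
  case: (leqP j s) => hjs.
  + have := flat s t hjs lt_st; lia.
  + have := bounds s le_is (ltnW hjs); have := flat j t (leqnn _) htj; lia.
Qed.

Lemma asc_section_extend_left a i j m :
  asc_section i j -> flat_section a i -> (a <= m <= i)%N ->
  (forall x, (a <= x <= i)%N -> (f m <= f x)%R) -> asc_section m j.
Proof.
case=> lt_ij bounds gap no_down flat /andP[le_am le_mi] m_min.
have fmi : (f m <= f i)%R by apply: m_min; lia.
split; first lia.
- move=> x le_mx le_xj; case: (leqP i x) => hix.
  + have := bounds x hix le_xj; lia.
  + have := m_min x; have := flat x i (leq_trans le_am le_mx) hix (leqnn _); lia.
- lia.
- move=> s t le_ms lt_st le_tj; case: (leqP i s) => his; first exact: no_down.
  case: (leqP t i) => hti.
  + have := flat s t (leq_trans le_am le_ms) lt_st hti; lia.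
  + have := bounds t (ltnW hti) le_tj.
    have := flat s i (leq_trans le_am le_ms) his (leqnn _); lia.
Qed.

Lemma asc_section_join i j i' j' :
  asc_section i j -> asc_section i' j' -> (j < i')%N -> flat_section j i' ->
  asc_section i j'.
Proof.
case=> lt_ij bounds gap no_down [lt_ij' bounds' gap' no_down'] lt_ji' flat.
have := flat j i' (leqnn _) lt_ji' (leqnn _) => flat_ends.
split; first lia.
- move=> x le_ix le_xj'; case: (leqP x j) => hxj; first by have := bounds x le_ix hxj; lia.
  case: (leqP i' x) => hxi; first by have := bounds' x hxi le_xj'; lia.
  have := flat j x (leqnn _) hxj (ltnW hxi); have := flat x i' (ltnW hxj) hxi (leqnn _); lia.
- lia.
- move=> s t le_is lt_st le_tj'.
  case: (leqP t j) => htj; first exact: no_down.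
  case: (leqP i' s) => hsi; first exact: no_down'.
  case: (leqP j s) => hjs.
  + case: (leqP t i') => hti; first by have := flat s t hjs lt_st hti; lia.
    have := bounds' t (ltnW hti) le_tj'; have := flat s i' hjs hsi (leqnn _); lia.
  + have := bounds s le_is (ltnW hjs).
    case: (leqP t i') => hti; first by have := flat j t (leqnn _) htj hti; lia.
    have := bounds' t (ltnW hti) le_tj'; lia.
Qed.

Lemma maximal_asc_section_no_flat_gap N i j i' j' :
  maximal_asc_section N i j -> asc_section i' j' -> (j' < N)%N -> (j < i')%N ->
  ~ flat_section j i'.
Proof.
case=> asc_ij _ maximal asc_ij' lt_j'N lt_ji' flat.
have [lt_i'j' _ _ _] := asc_ij'.
have [_ eq_j'j] := maximal i j' lt_j'N (asc_section_join asc_ij asc_ij' lt_ji' flat)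
  (leqnn _) (ltnW (ltn_trans lt_ji' lt_i'j')).
lia.
Qed.

End AscendingSections.

Lemma flat_section_opp f k a b :
  flat_section f k a b -> flat_section (fun x => - f x)%R k a b.
Proof. by move=> flat s t ? ? ?; have := flat s t; lia. Qed.

(* [g] is tied to [f] pointwise, so that the lemma applies both with
   [f = wval w] and with [f = - wval w]. *)
Lemma maximal_asc_sections_opp_no_flat_gap f g k N i j i' j' :
  (forall x, g x = - f x)%R ->
  maximal_asc_section f k N i j -> maximal_asc_section g k N i' j' -> (j < i')%N ->
  ~ flat_section f k j i'.
Proof.
move=> gE [asc_f _ max_f] [asc_g lt_j'N max_g] lt_ji' flat.
have [lt_i'j' _ _ _] := asc_g.
have [m le_jmi' m_max] := exists_argmax f (ltnW lt_ji').
have /(max_f i m) [|||_ eq_mj] := asc_section_extend_right asc_f flat le_jmi' m_max; try lia.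
have flat_g : flat_section g k j i'.
  by move=> s t ? ? ?; rewrite !gE; have := flat s t; lia.
have m_min x : (j <= x <= i')%N -> (g m <= g x)%R by move/m_max; rewrite !gE lerN2.
have /(max_g m j') [|||eq_mi' _] := asc_section_extend_left asc_g flat_g le_jmi' m_min; try lia.
Qed.

Lemma k_ascendingE n (w : 'S_n) k i j :
  k_ascending w k i j <-> (j < n)%N /\ asc_section (wval w) k i j.
Proof.
split.
- case=> /andP[lt_ij lt_jn] bounds gap no_down; do 2 split => //.
    by move=> m ? ?; apply: bounds; lia.
  move=> s t ? ? ?; rewrite ltNge; apply/negP => down; apply: no_down.
  by exists s, t; do 3 split => //; lia.
- case=> lt_jn [lt_ij bounds gap no_down]; split => //; first lia.
    by move=> m /andP[]; apply: bounds.
  by case=> s [t [? [? [? down]]]]; have := no_down s t; lia.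
Qed.

Lemma k_descendingE n (w : 'S_n) k i j :
  k_descending w k i j <-> (j < n)%N /\ asc_section (fun x => - wval w x)%R k i j.
Proof.
split.
- case=> /andP[lt_ij lt_jn] bounds gap no_up; do 2 split => //; try lia.
    by move=> m le_im le_mj; have := bounds m; rewrite le_im le_mj => /(_ isT); lia.
  move=> s t ? ? ?; rewrite ltNge; apply/negP => up; apply: no_up.
  by exists s, t; do 3 split => //; lia.
- case=> lt_jn [lt_ij bounds gap no_up]; split => //; try lia.
    by move=> m /andP[? ?]; have := bounds m; lia.
  by case=> s [t [? [? [? up]]]]; have := no_up s t; lia.
Qed.

Lemma maximal_asc_section_of_ascending n (w : 'S_n) k i j :
  max_k_ascending w k i j -> maximal_asc_section (wval w) k n i j.
Proof.
case=> /k_ascendingE[lt_jn asc_ij] maximal; split => // i' j' lt_j'n asc_ij'.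
exact/maximal/k_ascendingE.
Qed.

Lemma maximal_asc_section_of_descending n (w : 'S_n) k i j :
  max_k_descending w k i j -> maximal_asc_section (fun x => - wval w x)%R k n i j.
Proof.
case=> /k_descendingE[lt_jn asc_ij] maximal; split => // i' j' lt_j'n asc_ij'.
exact/maximal/k_descendingE.
Qed.

Lemma flat_section_of_no_kup_kdown n (w : 'S_n) k a b : (b < n)%N ->
  ~ (kup_in w k a b \/ kdown_in w k a b) -> flat_section (wval w) k a b.
Proof.
move=> lt_bn no_up_down s t ? ? ?; split; rewrite ltNge; apply/negP => H; apply: no_up_down.
- by right; exists s, t; do 3 split => //; lia.
- by left; exists s, t; do 3 split => //; lia.
Qed.

Theorem lemma2p7 (n : nat) (k : nat) (w : 'S_n) (i j i' j' : nat) :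
  (2 <= n)%N -> (1 <= k <= n - 1)%N ->
  max_k_section w k i j -> max_k_section w k i' j' ->
  (j < i')%N ->
  kup_in w k j i' \/ kdown_in w k j i'.
Proof.
move=> _ _ sec_ij sec_i'j' lt_ji'; apply: NNPP => no_up_down.
have lt_i'n : (i' < n)%N.
  by case: sec_i'j' => [/maximal_asc_section_of_ascending|/maximal_asc_section_of_descending]
    [[? _ _ _] ? _]; lia.
have flat := flat_section_of_no_kup_kdown lt_i'n no_up_down.
have flat_opp := flat_section_opp flat.
case: sec_ij => [/maximal_asc_section_of_ascending|/maximal_asc_section_of_descending] max_ij;
case: sec_i'j' => [/maximal_asc_section_of_ascending|/maximal_asc_section_of_descending] max_i'j'.
- by case: max_i'j' => [asc_i'j' ? _]; exact: maximal_asc_section_no_flat_gap max_ij asc_i'j' _ _ flat.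
- exact: maximal_asc_sections_opp_no_flat_gap max_ij max_i'j' lt_ji' flat.
- by apply: maximal_asc_sections_opp_no_flat_gap max_ij max_i'j' lt_ji' flat_opp => x; rewrite opprK.
- by case: max_i'j' => [asc_i'j' ? _]; exact: maximal_asc_section_no_flat_gap max_ij asc_i'j' _ _ flat_opp.
Qed.
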